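(* Let $S$ be a complete metric space with distance $d$, and let $\preceq$ be a topological orientation on $S$. Assume that every left-bounded pair in $S$ has a meet, and that $h:S\to\mathbb{R}$ is continuous and a discriminator. Then $(S,\preceq)$ is a cc sponge.
   Context: An orientation on $S$ is a reflexive, antisymmetric binary relation $\preceq$; it is a topological orientation if $\preceq$ is a closed subset of $S\times S$. For $P\subseteq S$: $P$ is left-bounded if some $s\in S$ has $s\preceq p$ for all $p\in P$, right-bounded if some $s$ has $p\preceq s$ for all $p\in P$. The meet of $P$ is an element $x$ with $x\preceq p$ for all $p\in P$ and $y\preceq x$ for every $y$ with $y\preceq p$ for all $p\in P$; the join is defined dually. $(S,\preceq)$ is a cc sponge if every nonempty right-bounded subset has a join. A function $h:S\to\mathbb{R}$ is a discriminator if for every $\varepsilon>0$ there is $\delta>0$ such that for all $x,y\in S$, $x\preceq y$ and $h(y)<h(x)+\delta$ imply $d(x,y)<\varepsilon$. *)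

From Stdlib Require Import Reals.
Open Scope R_scope.

Section Defs.
Context {S : Type}.

Definition is_metric (d : S -> S -> R) : Prop :=
  (forall x y, 0 <= d x y) /\
  (forall x y, d x y = 0 <-> x = y) /\
  (forall x y, d x y = d y x) /\
  (forall x y z, d x z <= d x y + d y z).

Definition cauchy_seq (d : S -> S -> R) (u : nat -> S) : Prop :=
  forall eps, 0 < eps -> exists N, forall m n, (N <= m)%nat -> (N <= n)%nat ->
    d (u m) (u n) < eps.

Definition converges_to (d : S -> S -> R) (u : nat -> S) (l : S) : Prop :=
  forall eps, 0 < eps -> exists N, forall n, (N <= n)%nat -> d (u n) l < eps.

Definition complete_metric (d : S -> S -> R) : Prop :=
  forall u, cauchy_seq d u -> exists l, converges_to d u l.

Definition orientation (le : S -> S -> Prop) : Prop :=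
  (forall x, le x x) /\ (forall x y, le x y -> le y x -> x = y).

(* le is a closed subset of S x S (product topology of the metric topology):
   its complement is open, i.e. every non-related pair has a neighbourhood
   (product of balls) consisting of non-related pairs. *)
Definition closed_relation (d : S -> S -> R) (le : S -> S -> Prop) : Prop :=
  forall x y, ~ le x y -> exists eps, 0 < eps /\
    forall x' y', d x x' < eps -> d y y' < eps -> ~ le x' y'.

Definition topological_orientation (d : S -> S -> R) (le : S -> S -> Prop) : Prop :=
  orientation le /\ closed_relation d le.

Definition left_bounded (le : S -> S -> Prop) (P : S -> Prop) : Prop :=
  exists s, forall p, P p -> le s p.

Definition right_bounded (le : S -> S -> Prop) (P : S -> Prop) : Prop :=
  exists s, forall p, P p -> le p s.

Definition is_meet (le : S -> S -> Prop) (P : S -> Prop) (x : S) : Prop :=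
  (forall p, P p -> le x p) /\
  (forall y, (forall p, P p -> le y p) -> le y x).

Definition is_join (le : S -> S -> Prop) (P : S -> Prop) (x : S) : Prop :=
  (forall p, P p -> le p x) /\
  (forall y, (forall p, P p -> le p y) -> le x y).

Definition pair_set (x y : S) : S -> Prop := fun p => p = x \/ p = y.

Definition cc_sponge (le : S -> S -> Prop) : Prop :=
  forall P : S -> Prop, (exists p, P p) -> right_bounded le P ->
    exists x, is_join le P x.

Definition continuous_fun (d : S -> S -> R) (h : S -> R) : Prop :=
  forall x eps, 0 < eps -> exists delta, 0 < delta /\
    forall y, d x y < delta -> Rabs (h y - h x) < eps.

Definition discriminator (d : S -> S -> R) (le : S -> S -> Prop) (h : S -> R) : Prop :=
  forall eps, 0 < eps -> exists delta, 0 < delta /\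
    forall x y, le x y -> h y < h x + delta -> d x y < eps.

End Defs.

(** The upper bounds [U] of a nonempty right-bounded set form a closed set which is
    directed downwards, since the meet of two upper bounds is again one.  By the
    discriminator property, [h] is strictly increasing along [⪯], and small increments
    of [h] along [⪯] force small distances.  Hence a [⪯]-descending sequence in [U]
    along which [h] approaches [inf h(U)] fast enough is Cauchy; its limit lies in [U]
    and, by continuity, minimises [h] on [U].  A minimiser of [h] on a downward
    directed set is its least element: its meet with any other element of [U] has no
    larger [h]-value, so it coincides with it. *)

From Stdlib Require Import Reals Lra Lia Classical ClassicalEpsilon.
Open Scope R_scope.

Lemma ex_inf_approx {T : Type} (A : T -> Prop) (f : T -> R) (b : R) :
  (exists x, A x) -> (forall x, A x -> b <= f x) ->
  exists c, (forall x, A x -> c <= f x) /\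
            (forall e, 0 < e -> exists x, A x /\ f x < c + e).
Proof.
  intros [x0 Ax0] Hb.
  destruct (completeness (fun r => exists x, A x /\ r = - f x)) as [L [HLub HLleast]].
  - exists (- b). intros r [x [Ax ->]]. specialize (Hb x Ax). lra.
  - now exists (- f x0), x0.
  - exists (- L). split.
    + intros x Ax. assert (- f x <= L) by (apply HLub; now exists x). lra.
    + intros e He. apply NNPP. intros Hnone.
      assert (L <= L - e); [|lra].
      apply HLleast. intros r [x [Ax ->]]. apply Rnot_lt_le. intros Hlt.
      apply Hnone. exists x. split; [exact Ax | lra].
Qed.

Lemma nat_dependent_choice (A : Type) (Q : nat -> A -> Prop) (Rel : A -> A -> Prop) :
  (exists x, Q 0%nat x) ->
  (forall n x, Q n x -> exists y, Q (S n) y /\ Rel x y) ->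
  exists f : nat -> A, forall n, Q n (f n) /\ Rel (f n) (f (S n)).
Proof.
  intros H0 Hstep.
  destruct (constructive_indefinite_description _ H0) as [x0 Hx0].
  assert (step : forall n (x : {x | Q n x}), {y | Q (S n) y /\ Rel (proj1_sig x) y}).
  { intros n [x Hx]. exact (constructive_indefinite_description _ (Hstep n x Hx)). }
  pose (g := fix g n : {x | Q n x} :=
               match n with
               | O => exist _ x0 Hx0
               | S k => let (y, Hy) := step k (g k) in exist _ y (proj1 Hy)
               end).
  exists (fun n => proj1_sig (g n)). intros n. split.
  - exact (proj2_sig (g n)).
  - simpl. destruct (step n (g n)) as [y Hy]. exact (proj2 Hy).
Qed.

Lemma Un_cv_half_pow : Un_cv (fun n => (/ 2) ^ n) 0.
Proof.
  intros e He. destruct (cv_pow_half 1 e He) as [N HN].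
  exists N. intros n Hn. specialize (HN n Hn).
  now rewrite pow_inv, <- (Rmult_1_l (/ 2 ^ n)).
Qed.

Lemma Un_cv_le_half_pow (u : nat -> R) (a c : R) :
  Un_cv u a -> (forall n, u n <= c + (/ 2) ^ n) -> a <= c.
Proof.
  intros Hu Hle. rewrite <- (Rplus_0_r c).
  apply (Rle_cv_lim Hle Hu). apply CV_plus; [|exact Un_cv_half_pow].
  intros e He. exists 0%nat. intros n _.
  unfold R_dist. now rewrite Rminus_diag, Rabs_R0.
Qed.

Definition down_directed {T : Type} (le : T -> T -> Prop) (U : T -> Prop) : Prop :=
  forall x y, U x -> U y -> exists m, U m /\ le m x /\ le m y.

Definition seq_closed {T : Type} (d : T -> T -> R) (U : T -> Prop) : Prop :=
  forall u l, (forall n, U (u n)) -> converges_to d u l -> U l.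

Section Metric.
Context {T : Type} {d : T -> T -> R} (d_metric : is_metric d).

Lemma dist_refl x : d x x = 0.
Proof. now apply d_metric. Qed.

Lemma dist_sym x y : d x y = d y x.
Proof. apply d_metric. Qed.

Lemma half_pow_steps_cauchy (u : nat -> T) :
  (forall n, d (u n) (u (S n)) <= (/ 2) ^ n) -> cauchy_seq d u.
Proof.
  intros Hstep.
  destruct d_metric as [_ [_ [_ Htri]]].
  assert (Htele : forall k n,
             d (u n) (u (n + k)%nat) <= 2 * (/ 2) ^ n - 2 * (/ 2) ^ (n + k)).
  { induction k as [|k IHk]; intros n.
    - rewrite Nat.add_0_r, dist_refl. lra.
    - rewrite Nat.add_succ_r.
      pose proof (Htri (u n) (u (n + k)%nat) (u (S (n + k)))).
      pose proof (IHk n). pose proof (Hstep (n + k)%nat).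
      simpl pow. lra. }
  intros e He. destruct (Un_cv_half_pow (e / 2)) as [N HN]; [lra|].
  exists N.
  assert (Hle : forall m n, (N <= m)%nat -> (m <= n)%nat -> d (u m) (u n) < e).
  { intros m n Hm Hmn. replace n with (m + (n - m))%nat by lia.
    pose proof (Htele (n - m)%nat m). specialize (HN m Hm).
    unfold R_dist in HN. rewrite Rminus_0_r, Rabs_right in HN
      by (apply Rle_ge, pow_le; lra).
    assert (0 <= (/ 2) ^ (m + (n - m))) by (apply pow_le; lra). lra. }
  intros m n Hm Hn. destruct (Nat.le_ge_cases m n).
  - now apply Hle.
  - rewrite dist_sym. now apply Hle.
Qed.

Lemma closed_relation_limit_r (le : T -> T -> Prop) (u : nat -> T) (l p : T) :
  closed_relation d le -> converges_to d u l ->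
  (forall n, le p (u n)) -> le p l.
Proof.
  intros Hclosed Hlim Hle. apply NNPP. intros Hnle.
  destruct (Hclosed p l Hnle) as [e [He Hball]].
  destruct (Hlim e He) as [N HN].
  apply (Hball p (u N)).
  - rewrite dist_refl. exact He.
  - rewrite dist_sym. now apply HN.
  - apply Hle.
Qed.

Lemma continuous_Un_cv (h : T -> R) (u : nat -> T) (l : T) :
  continuous_fun d h -> converges_to d u l -> Un_cv (fun n => h (u n)) (h l).
Proof.
  intros Hcont Hlim e He.
  destruct (Hcont l e He) as [del [Hdel Hball]].
  destruct (Hlim del Hdel) as [N HN].
  exists N. intros n Hn. apply Hball. rewrite dist_sym. now apply HN.
Qed.

Context {le : T -> T -> Prop} {h : T -> R} (h_discr : discriminator d le h).

Lemma discriminator_eq x y : le x y -> h y <= h x -> x = y.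
Proof.
  intros Hxy Hh. apply d_metric.
  destruct (Rle_lt_or_eq_dec 0 (d x y) (proj1 d_metric x y)) as [Hpos|]; [|auto].
  destruct (h_discr (d x y) Hpos) as [del [Hdel Hsmall]].
  assert (d x y < d x y) by (apply Hsmall; [exact Hxy | lra]). lra.
Qed.

Lemma discriminator_monotone x y : le x y -> h x <= h y.
Proof.
  intros Hxy. destruct (Rle_or_lt (h x) (h y)) as [|Hlt]; [assumption|].
  rewrite (discriminator_eq x y Hxy); lra.
Qed.

Lemma discriminator_half_pow :
  exists del : nat -> R, forall n, 0 < del n /\ del n <= (/ 2) ^ n /\
    forall x y, le x y -> h y < h x + del n -> d x y <= (/ 2) ^ n.
Proof.
  apply (choice (fun n del => 0 < del /\ del <= (/ 2) ^ n /\
    forall x y, le x y -> h y < h x + del -> d x y <= (/ 2) ^ n)).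
  intros n.
  assert (Hpow : 0 < (/ 2) ^ n) by (apply pow_lt; lra).
  destruct (h_discr _ Hpow) as [del [Hdel Hsmall]].
  exists (Rmin del ((/ 2) ^ n)). split; [|split].
  - now apply Rmin_glb_lt.
  - apply Rmin_r.
  - intros x y Hxy Hh. left. apply Hsmall; [exact Hxy|].
    pose proof (Rmin_l del ((/ 2) ^ n)). lra.
Qed.

Lemma down_directed_argmin_least (U : T -> Prop) (l : T) :
  down_directed le U -> U l -> (forall y, U y -> h l <= h y) ->
  forall y, U y -> le l y.
Proof.
  intros Hdir Ul Hmin y Uy.
  destruct (Hdir l y Ul Uy) as [m [Um [Hml Hmy]]].
  rewrite <- (discriminator_eq m l Hml (Hmin m Um)). exact Hmy.
Qed.

Lemma down_directed_descending_seq (U : T -> Prop) (c : R) (del : nat -> R) :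
  down_directed le U ->
  (forall e, 0 < e -> exists x, U x /\ h x < c + e) ->
  (forall n, 0 < del n) ->
  exists v : nat -> T, forall n,
    (U (v n) /\ h (v n) < c + del n) /\ le (v (S n)) (v n).
Proof.
  intros Hdir Happrox Hdel.
  apply (nat_dependent_choice T (fun n x => U x /\ h x < c + del n)
                              (fun x y => le y x)).
  - apply Happrox, Hdel.
  - intros n x [Ux _].
    destruct (Happrox (del (S n)) (Hdel (S n))) as [w [Uw Hw]].
    destruct (Hdir x w Ux Uw) as [m [Um [Hmx Hmw]]].
    exists m. pose proof (discriminator_monotone m w Hmw).
    repeat split; auto; lra.
Qed.

Lemma down_directed_closed_ex_argmin (U : T -> Prop) (b : R) :
  complete_metric d -> continuous_fun d h ->
  down_directed le U -> seq_closed d U ->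
  (exists x, U x) -> (forall x, U x -> b <= h x) ->
  exists l, U l /\ forall y, U y -> h l <= h y.
Proof.
  intros Hcomplete Hcont Hdir Hclosed Hne Hb.
  destruct (ex_inf_approx U h b Hne Hb) as [c [Hc Happrox]].
  destruct discriminator_half_pow as [del Hdel].
  destruct (down_directed_descending_seq U c del Hdir Happrox) as [v Hv];
    [apply Hdel|].
  assert (Hsteps : forall n, d (v n) (v (S n)) <= (/ 2) ^ n).
  { intros n. destruct (Hv n) as [[_ Hn] Hle].
    pose proof (Hc _ (proj1 (proj1 (Hv (S n))))).
    rewrite dist_sym. apply (Hdel n); [exact Hle | lra]. }
  destruct (Hcomplete v (half_pow_steps_cauchy v Hsteps)) as [l Hlim].
  exists l. split.
  - apply (Hclosed v l); [intros n; apply Hv | exact Hlim].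
  - (* [le] need not be transitive, so [l] is not known to lie below the [v n];
       the bound [h l <= c] comes from continuity instead. *)
    intros y Uy. apply Rle_trans with c; [|now apply Hc].
    apply (Un_cv_le_half_pow _ _ _ (continuous_Un_cv h v l Hcont Hlim)).
    intros n. destruct (Hv n) as [[_ Hn] _]. destruct (Hdel n) as [_ [Hn' _]]. lra.
Qed.

End Metric.

Section UpperBounds.
Context {T : Type} (le : T -> T -> Prop) (P : T -> Prop).

Definition upper_bounds : T -> Prop := fun u => forall p, P p -> le p u.

Lemma upper_bounds_down_directed :
  (exists p, P p) ->
  (forall x y, left_bounded le (pair_set x y) -> exists m, is_meet le (pair_set x y) m) ->
  down_directed le upper_bounds.
Proof.
  intros [p0 Hp0] Hmeet x y Ux Uy.
  destruct (Hmeet x y) as [m [Hm_lower Hm_greatest]].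
  { exists p0. intros q [-> | ->]; auto. }
  exists m. split; [|split].
  - intros p Hp. apply Hm_greatest. intros q [-> | ->]; auto.
  - apply Hm_lower. now left.
  - apply Hm_lower. now right.
Qed.

Lemma upper_bounds_seq_closed (d : T -> T -> R) :
  is_metric d -> closed_relation d le -> seq_closed d upper_bounds.
Proof.
  intros Hd Hclosed u l Hu Hlim p Hp.
  apply (closed_relation_limit_r Hd le u); [exact Hclosed | exact Hlim |].
  intros n. now apply Hu.
Qed.

End UpperBounds.

Theorem mainTheorem3 (S : Type) (d : S -> S -> R) (le : S -> S -> Prop) (h : S -> R) :
  is_metric d ->
  complete_metric d ->
  topological_orientation d le ->
  (forall x y : S, left_bounded le (pair_set x y) ->
     exists m, is_meet le (pair_set x y) m) ->
  continuous_fun d h ->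
  discriminator d le h ->
  cc_sponge le.
Proof.
  intros Hd Hcomplete [_ Hclosed] Hmeet Hcont Hdisc P Hne [s Hs].
  set (U := upper_bounds le P).
  assert (Hdir : down_directed le U) by now apply upper_bounds_down_directed.
  destruct Hne as [p0 Hp0].
  assert (Hbelow : forall x, U x -> h p0 <= h x).
  { intros x Ux. apply (discriminator_monotone Hd Hdisc). now apply Ux. }
  destruct (down_directed_closed_ex_argmin Hd Hdisc U (h p0) Hcomplete Hcont Hdir
              (upper_bounds_seq_closed le P d Hd Hclosed) (ex_intro _ s Hs) Hbelow)
    as [l [Ul Hmin]].
  exists l. split; [exact Ul|].
  exact (down_directed_argmin_least Hd Hdisc U l Hdir Ul Hmin).
Qed.
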